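(* Let $\Gamma$ be a finite group and let $(X,\Gamma,\alpha,\mathcal{I})$ be a voltage graph, with $\mathcal{I}=(I_v)_{v\in V_X}$, such that the derived graph $X(\Gamma,\mathcal{I})$ is connected. (1) There is an exact sequence of $\mathbb{Z}[\Gamma]$-modules \[ 0\to\mathbb{Z}\to\bigoplus_{v\in V_X}\mathbb{Z}[\Gamma/I_v]\xrightarrow{\mathcal{L}_{X,\Gamma,\mathcal{I}}}\bigoplus_{v\in V_X}\mathbb{Z}[\Gamma/I_v]\to\mathrm{Pic}(X(\Gamma,\mathcal{I}))\to0. \] Here the first map sends $1$ to the sum of all cosets in all components. (2) Let $H$ be a normal subgroup of $\Gamma$, and let $(X,\Gamma/H,\alpha_H,\mathcal{I}_H)$ be the induced voltage graph. Then the exact sequence of (1) for $(X,\Gamma,\alpha,\mathcal{I})$ and the exact sequence of (1) for $(X,\Gamma/H,\alpha_H,\mathcal{I}_H)$, namely \[ 0\to\mathbb{Z}\to\bigoplus_v\mathbb{Z}[\Gamma/I_vH]\xrightarrow{\mathcal{L}_{X,\Gamma/H,\mathcal{I}_H}}\bigoplus_v\mathbb{Z}[\Gamma/I_vH]\to\mathrm{Pic}(X(\Gamma/H,\mathcal{I}_H))\to0, \] fit into a commutative diagram with the following vertical maps: - multiplication by $\#H$ on $\mathbb{Z}$; - the map $\beta:\bigoplus_v\mathbb{Z}[\Gamma/I_v]\to\bigoplus_v\mathbb{Z}[\Gamma/I_vH]$, which is $\mathbb{Z}[\Gamma]$-linear and on the $v$-component sends $1$ to $\#(H\cap I_v)\cdot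 1$; - the natural projection $\bigoplus_v\mathbb{Z}[\Gamma/I_v]\to\bigoplus_v\mathbb{Z}[\Gamma/I_vH]$; - the surjection $\mathrm{Pic}(X(\Gamma,\mathcal{I}))\to\mathrm{Pic}(X(\Gamma/H,\mathcal{I}_H))$ induced by this projection.
   Context: Finite graphs are in Serre's formalism: vertex set $V_X$, edge set $\mathbb{E}_X$ with fixed-point-free involution $e\mapsto\bar e$, and maps $s,t$ with $s(\bar e)=t(e)$; $\mathbb{E}_{X,v}=\{e:s(e)=v\}$. For a finite connected graph $Y$, $\mathrm{Div}(Y)=\bigoplus_{w\in V_Y}\mathbb{Z}[w]$, $\mathcal{L}_Y([w])=\sum_{e\in\mathbb{E}_{Y,w}}([w]-[t(e)])$, and $\mathrm{Pic}(Y)=\mathrm{coker}\,\mathcal{L}_Y$. A voltage graph $(X,\Gamma,\alpha,\mathcal{I})$ consists of a finite graph $X$, a group $\Gamma$, a map $\alpha:\mathbb{E}_X\to\Gamma$ with $\alpha(\bar e)=\alpha(e)^{-1}$, and a family $\mathcal{I}=(I_v)_{v\in V_X}$ of subgroups of $\Gamma$. The derived graph $X(\Gamma,\mathcal{I})$ (for finite $\Gamma$) has vertex set $\coprod_v(\Gamma/I_v\times\{v\})$ and edge set $\Gamma\times\mathbb{E}_X$, with $s((\gamma,e))=(\gamma I_{s(e)},s(e))$, $t((\gamma,e))=(\gamma\alpha(e)I_{t(e)},t(e))$ and $\overline{(\gamma,e)}=(\gamma\alpha(e),\bar e)$; $\Gamma$ acts by left multiplication. For a normal subgroup $H$ with projection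 $\pi:\Gamma\to\Gamma/H$, the induced voltage graph is $(X,\Gamma/H,\pi\circ\alpha,(I_vH/H)_v)$. Let $\mathbb{Z}[\Gamma/I_v]=\mathbb{Z}[\Gamma]\otimes_{\mathbb{Z}[I_v]}\mathbb{Z}$. We identify $\mathrm{Div}(X(\Gamma,\mathcal{I}))\cong\bigoplus_{v\in V_X}\mathbb{Z}[\Gamma/I_v]$ as $\mathbb{Z}[\Gamma]$-modules via $(\gamma I_v,v)\leftrightarrow\gamma$ in the $v$-component. Then $\mathcal{L}_{X,\Gamma,\mathcal{I}}$ is the endomorphism corresponding to $\mathcal{L}_{X(\Gamma,\mathcal{I})}$ under this identification, and similarly for $\Gamma/H$, where $(\Gamma/H)/(I_vH/H)$ is identified with $\Gamma/I_vH$. *)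

From HB Require Import structures.
From mathcomp Require Import all_boot all_order all_fingroup all_algebra.
From mathcomp Require Import generic_quotient.
From Stdlib Require Import ClassicalDescription.
Set Implicit Arguments. Unset Strict Implicit. Unset Printing Implicit Defensive.
Import GRing.Theory.
Local Open Scope ring_scope.
Local Open Scope quotient_scope.

Definition serre_graph (VT ET : finType) (src tgt : ET -> VT) (bar : ET -> ET) : Prop :=
  [/\ forall e, bar (bar e) = e, forall e, bar e <> e & forall e, src (bar e) = tgt e].

Definition edge_rel (VT ET : finType) (src tgt : ET -> VT) : rel VT :=
  fun x y => [exists e : ET, (src e == x) && (tgt e == y)].
Definition connected_graph (VT ET : finType) (src tgt : ET -> VT) : Prop :=
  (0 < #|VT|)%N /\ forall x y : VT, connect (edge_rel src tgt) x y.

Definition divisor (VT : finType) := {ffun VT -> int}.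
Definition delta (VT : finType) (w : VT) : divisor VT := [ffun u => ((u == w) : nat)%:Z].

Definition laplacian (VT ET : finType) (src tgt : ET -> VT) (D : divisor VT) : divisor VT :=
  \sum_(w : VT) (\sum_(e : ET | src e == w) (delta w - delta (tgt e))) *~ D w.

Lemma laplacianD (VT ET : finType) (src tgt : ET -> VT) (D1 D2 : divisor VT) :
  laplacian src tgt (D1 + D2) = laplacian src tgt D1 + laplacian src tgt D2.
Proof.
rewrite /laplacian -big_split /=; apply: eq_bigr => w _.
by rewrite ffunE mulrzDr.
Qed.

Lemma laplacian0 (VT ET : finType) (src tgt : ET -> VT) :
  laplacian src tgt 0 = 0.
Proof. by apply: big1 => w _; rewrite ffunE mulr0z. Qed.

Lemma laplacianN (VT ET : finType) (src tgt : ET -> VT) (D : divisor VT) :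
  laplacian src tgt (- D) = - laplacian src tgt D.
Proof.
apply/eqP; rewrite -subr_eq0 opprK -laplacianD addNr; exact/eqP/laplacian0.
Qed.

Definition pic_rel (VT ET : finType) (src tgt : ET -> VT) : rel (divisor VT) :=
  fun D D' => if excluded_middle_informative
                   (exists D0 : divisor VT, D - D' = laplacian src tgt D0)
              then true else false.

Lemma pic_relP (VT ET : finType) (src tgt : ET -> VT) D D' :
  reflect (exists D0, D - D' = laplacian src tgt D0) (pic_rel src tgt D D').
Proof. by rewrite /pic_rel; case: excluded_middle_informative => h; constructor. Qed.

Lemma pic_rel_refl (VT ET : finType) (src tgt : ET -> VT) : reflexive (pic_rel src tgt).
Proof. by move=> D; apply/pic_relP; exists 0; rewrite subrr laplacian0. Qed.

Lemma pic_rel_sym (VT ET : finType) (src tgt : ET -> VT) : symmetric (pic_rel src tgt).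
Proof.
move=> D D'; apply/pic_relP/pic_relP => -[D0 h]; exists (- D0);
by rewrite laplacianN -h opprB.
Qed.

Lemma pic_rel_trans (VT ET : finType) (src tgt : ET -> VT) : transitive (pic_rel src tgt).
Proof.
move=> D2 D1 D3 /pic_relP[A hA] /pic_relP[B hB]; apply/pic_relP; exists (A + B).
by rewrite laplacianD -hA -hB addrA subrK.
Qed.

Canonical pic_equiv (VT ET : finType) (src tgt : ET -> VT) :=
  EquivRel (pic_rel src tgt) (@pic_rel_refl VT ET src tgt)
           (@pic_rel_sym VT ET src tgt) (@pic_rel_trans VT ET src tgt).

Definition Pic (VT ET : finType) (src tgt : ET -> VT) := {eq_quot (pic_equiv src tgt)}.
Definition to_pic (VT ET : finType) (src tgt : ET -> VT) (D : divisor VT) : Pic src tgt :=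
  \pi_(Pic src tgt) D.

Definition dvert (V : finType) (gT : finGroupType) (I : V -> {group gT}) :=
  {p : V * {set gT} | p.2 \in lcosets (I p.1) [set: gT]}.

Lemma mkvert_proof (V : finType) (gT : finGroupType) (I : V -> {group gT}) (v : V) (g : gT) :
  (v, (g *: (I v : {set gT}))%g).2 \in lcosets (I (v, (g *: (I v : {set gT}))%g).1) [set: gT].
Proof.
rewrite /= mem_lcosets; have := mem_mulg (in_setT g) (group1 (I v)).
by rewrite mulg1.
Qed.

Definition mkvert (V : finType) (gT : finGroupType) (I : V -> {group gT}) (v : V) (g : gT)
  : dvert I := exist _ (v, (g *: (I v : {set gT}))%g) (mkvert_proof I v g).
Arguments mkvert {V gT} I v g.

Definition dvert_base (V : finType) (gT : finGroupType) (I : V -> {group gT})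
  (x : dvert I) : V := (val x).1.
Definition dvert_coset (V : finType) (gT : finGroupType) (I : V -> {group gT})
  (x : dvert I) : {set gT} := (val x).2.

(* edges of X(Gamma, I): Gamma x E_X *)
Definition dsrc (V E : finType) (gT : finGroupType) (s : E -> V) (I : V -> {group gT})
  (ge : gT * E) : dvert I := mkvert I (s ge.2) ge.1.
Definition dtgt (V E : finType) (gT : finGroupType) (t : E -> V) (alpha : E -> gT)
  (I : V -> {group gT}) (ge : gT * E) : dvert I := mkvert I (t ge.2) (ge.1 * alpha ge.2)%g.
Definition dbar (E : finType) (gT : finGroupType) (bar : E -> E) (alpha : E -> gT)
  (ge : gT * E) : gT * E := ((ge.1 * alpha ge.2)%g, bar ge.2).

Definition dlap (V E : finType) (gT : finGroupType) (s t : E -> V) (alpha : E -> gT)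
  (I : V -> {group gT}) : divisor (dvert I) -> divisor (dvert I) :=
  laplacian (dsrc s I) (dtgt t alpha I).

Definition dPic (V E : finType) (gT : finGroupType) (s t : E -> V) (alpha : E -> gT)
  (I : V -> {group gT}) := Pic (dsrc s I) (dtgt t alpha I).

Definition dto_pic (V E : finType) (gT : finGroupType) (s t : E -> V) (alpha : E -> gT)
  (I : V -> {group gT}) : divisor (dvert I) -> dPic s t alpha I :=
  @to_pic _ _ (dsrc s I) (dtgt t alpha I).

Definition dunit (V : finType) (gT : finGroupType) (I : V -> {group gT}) (n : int)
  : divisor (dvert I) := (\sum_(x : dvert I) delta x) *~ n.
Arguments dunit {V gT} I n.

Arguments dsrc {V E gT} s I ge.
Arguments dtgt {V E gT} t alpha I ge.
Arguments dlap {V E gT} s t alpha I _.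
Arguments dPic {V E gT} s t alpha I.
Arguments dto_pic {V E gT} s t alpha I _.

Lemma vact_proof (V : finType) (gT : finGroupType) (I : V -> {group gT}) (g : gT)
  (x : dvert I) :
  ((val x).1, (g *: (val x).2)%g).2 \in lcosets (I ((val x).1, (g *: (val x).2)%g).1) [set: gT].
Proof.
case: x => [[v C] /= /lcosetsP[h _ ->]].
by apply/lcosetsP; exists (g * h)%g; rewrite ?inE // lcosetM.
Qed.

Definition vact (V : finType) (gT : finGroupType) (I : V -> {group gT}) (g : gT)
  (x : dvert I) : dvert I := exist _ ((val x).1, (g *: (val x).2)%g) (vact_proof g x).

(* (g . D)(x) = D(g^-1 x), so that g . [x] = [g x] *)
Definition dact (V : finType) (gT : finGroupType) (I : V -> {group gT}) (g : gT)
  (D : divisor (dvert I)) : divisor (dvert I) := [ffun x => D (vact (g^-1)%g x)].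

(* Z[Gamma]-linearity, where Gamma acts on the target through phi : Gamma -> Gamma' *)
Definition zgamma_linear (V : finType) (gT gT' : finGroupType) (phi : gT -> gT')
  (I : V -> {group gT}) (I' : V -> {group gT'})
  (f : divisor (dvert I) -> divisor (dvert I')) : Prop :=
  (forall D1 D2, f (D1 + D2) = f D1 + f D2) /\
  (forall g D, f (dact g D) = dact (phi g) (f D)).
Arguments zgamma_linear {V gT gT'} phi {I I'} f.

Definition exact_seq (V E : finType) (gT : finGroupType) (s t : E -> V) (alpha : E -> gT)
  (I : V -> {group gT}) : Prop :=
  [/\ (* the maps are Z[Gamma]-linear (Z with trivial action) *)
      (forall n m, dunit I (n + m) = dunit I n + dunit I m) /\
      (forall g n, dact g (dunit I n) = dunit I n) /\
      zgamma_linear id (dlap s t alpha I),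
      (forall n, dunit I n = 0 -> n = 0),
      (forall D, dlap s t alpha I D = 0 <-> exists n, D = dunit I n),
      (forall D, dto_pic s t alpha I D = dto_pic s t alpha I 0 <->
                 exists D0, D = dlap s t alpha I D0) &
      (forall P : dPic s t alpha I, exists D, dto_pic s t alpha I D = P)].

Definition qalpha (E : finType) (gT : finGroupType) (H : {group gT}) (alpha : E -> gT)
  : E -> coset_of H := fun e => coset H (alpha e).
Definition qI (V : finType) (gT : finGroupType) (H : {group gT}) (I : V -> {group gT})
  : V -> {group coset_of H} := fun v => (I v / H)%G.

Definition qvert (V : finType) (gT : finGroupType) (H : {group gT}) (I : V -> {group gT})
  (x : dvert I) : dvert (qI H I) :=
  mkvert (qI H I) (dvert_base x) (coset H (fingroup.repr (dvert_coset x))).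

Definition qproj (V : finType) (gT : finGroupType) (H : {group gT}) (I : V -> {group gT})
  (D : divisor (dvert I)) : divisor (dvert (qI H I)) :=
  [ffun y => \sum_(x : dvert I | qvert H x == y) D x].

Definition qbeta (V : finType) (gT : finGroupType) (H : {group gT}) (I : V -> {group gT})
  (D : divisor (dvert I)) : divisor (dvert (qI H I)) :=
  [ffun y => \sum_(x : dvert I | qvert H x == y)
                (#|H :&: I (dvert_base x)|%:Z * D x)].

Arguments qproj {V gT} H {I} D.
Arguments qbeta {V gT} H {I} D.
Arguments qvert {V gT} H {I} x.

(* The kernel of the Laplacian of a connected Serre graph consists of the constant
   divisors: at a vertex where D is maximal, every term D(w) - D(t e) of (L D)(w) is
   nonnegative, so they all vanish and the maximum spreads along edges.  The rest of
   (1) is Pic = coker L, and Gamma acts on X(Gamma, I) by graph automorphisms.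

   For (2), gamma I_v |-> (gamma H)(I_v H / H) is a graph morphism onto
   X(Gamma/H, I_H) covering (gamma, e) |-> (gamma H, e).  Pushing L D forward, the
   edges over (c, e) contribute sum_(h in H) D(c h I_(s e)), and h |-> c h I_v hits
   every vertex of the fibre over c (I_v H / H) exactly #(H :&: I_v) times; this is
   beta D evaluated there, so proj o L = L_H o beta. *)

From HB Require Import structures.
From mathcomp Require Import all_boot all_order all_fingroup all_algebra.
From mathcomp Require Import generic_quotient.
Import GRing.Theory Num.Theory Order.TTheory.
Set Implicit Arguments. Unset Strict Implicit. Unset Printing Implicit Defensive.
Local Open Scope ring_scope.

Section Laplacian.
Variables (VT ET : finType) (src tgt : ET -> VT).

Lemma laplacianE (D : divisor VT) u : laplacian src tgt D u =
  \sum_e D (src e) * (((src e == u) : nat)%:Z - ((tgt e == u) : nat)%:Z).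
Proof.
rewrite /laplacian sum_ffunE (partition_big src xpredT) //=.
apply: eq_bigr => w _; rewrite ffunMzE sum_ffunE mulrzz mulrC mulr_sumr.
by apply: eq_bigr => e /eqP <-; rewrite !ffunE ![_ == u]eq_sym.
Qed.

Lemma to_pic_eq (D D' : divisor VT) :
  to_pic src tgt D = to_pic src tgt D' <-> exists D0, D - D' = laplacian src tgt D0.
Proof.
rewrite /to_pic; split=> [/eqquotP/pic_relP //| /pic_relP h].
exact/eqquotP.
Qed.

Lemma to_pic_surj (P : Pic src tgt) : exists D, to_pic src tgt D = P.
Proof. by exists (repr P); rewrite /to_pic reprK. Qed.

Variable rev : ET -> ET.
Hypotheses (rev_inj : injective rev)
  (src_rev : forall e, src (rev e) = tgt e) (tgt_rev : forall e, tgt (rev e) = src e).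

Lemma laplacian_local (D : divisor VT) u :
  laplacian src tgt D u = \sum_(e | src e == u) (D u - D (tgt e)).
Proof.
rewrite laplacianE.
under eq_bigr do rewrite mulrBr.
rewrite sumrB [X in _ - X](reindex_inj rev_inj) /=.
under [X in _ - X]eq_bigr do rewrite src_rev tgt_rev.
rewrite -sumrB [RHS]big_mkcond /=; apply: eq_bigr => e _.
by case: eqP => [-> | _]; rewrite ?mulr1 ?mulr0 ?subr0.
Qed.

Lemma laplacian_cst c : laplacian src tgt [ffun=> c] = 0.
Proof.
by apply/ffunP => u; rewrite laplacian_local [RHS]ffunE big1 // => e _; rewrite !ffunE subrr.
Qed.

Hypothesis conn : forall x y, connect (edge_rel src tgt) x y.

Lemma laplacian_eq0_cst (D : divisor VT) :
  laplacian src tgt D = 0 -> forall x y, D x = D y.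
Proof.
move=> LD0 x0; have [m _ Dm_max] := @arg_maxP _ int _ x0 xpredT D isT.
have max_step x e : D x = D m -> src e = x -> D (tgt e) = D m.
  move=> Dx srcx; have := congr1 (fun F : divisor VT => F x) LD0.
  rewrite /= laplacian_local ffunE => LDx.
  have ge0 e' : src e' == x -> 0 <= D x - D (tgt e').
    by rewrite subr_ge0 Dx => _; apply: Dm_max.
  by have /eqP := psumr_eq0P ge0 LDx (introT eqP srcx); rewrite subr_eq0 Dx => /eqP.
have path_max p x : path (edge_rel src tgt) x p -> D x = D m -> D (last x p) = D m.
  elim: p x => //= z p IH x /andP[/existsP[e /andP[/eqP srce /eqP <-]] pth] Dx.
  exact/IH/(max_step _ _ Dx).
have Dmax y : D y = D m by have /connectP[p pth ->] := conn m y; apply: path_max.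
by move=> y; rewrite !Dmax.
Qed.

End Laplacian.

Lemma laplacian_precomp (VT ET : finType) (src tgt : ET -> VT) (tau : VT -> VT)
    (sg : ET -> ET) :
  injective tau -> injective sg ->
  (forall e, src (sg e) = tau (src e)) -> (forall e, tgt (sg e) = tau (tgt e)) ->
  forall D : divisor VT,
  laplacian src tgt [ffun x => D (tau x)] = [ffun x => laplacian src tgt D (tau x)].
Proof.
move=> tau_inj sg_inj src_sg tgt_sg D; apply/ffunP => u; rewrite ffunE !laplacianE.
rewrite [RHS](reindex_inj sg_inj) /=; apply: eq_bigr => e _.
by rewrite ffunE src_sg tgt_sg !(inj_eq tau_inj).
Qed.

Lemma connect_homo (T T' : finType) (e : rel T) (e' : rel T') (f : T -> T') :
  (forall x y, e x y -> e' (f x) (f y)) ->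
  forall x y, connect e x y -> connect e' (f x) (f y).
Proof.
move=> fe x y /connectP[p + ->]; elim: p x => [|z p IH] x /=; first by rewrite connect0.
by case/andP=> /fe exz /IH; apply: connect_trans (connect1 exz).
Qed.

Lemma sum_fibre_indicator (T T' : finType) (f : T -> T') (a : T) (y : T') :
  \sum_(x | f x == y) ((a == x) : nat)%:Z = ((f a == y) : nat)%:Z.
Proof.
rewrite big_mkcond (bigD1 a) //= eqxx big1 ?addr0 => [|x /negbTE nax]; first by case: ifP.
by rewrite (eq_sym a) nax if_same.
Qed.

Section DerivedGraph.
Variables (V : finType) (gT : finGroupType) (I : V -> {group gT}).

Lemma dunitE n (x : dvert I) : dunit I n x = n.
Proof.
rewrite /dunit ffunMzE sum_ffunE (bigD1 x) //= big1 => [|y nyx].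
  by rewrite ffunE eqxx addr0 mulrzz mul1r.
by rewrite ffunE eq_sym (negbTE nyx).
Qed.

Lemma vactM g h (x : dvert I) : vact g (vact h x) = vact (g * h)%g x.
Proof. by apply: val_inj; rewrite /= lcosetM. Qed.

Lemma vact1 (x : dvert I) : vact 1%g x = x.
Proof. by apply: val_inj; rewrite /= lcoset1; case: (val x). Qed.

Lemma vactK g : cancel (@vact _ _ I g) (vact g^-1).
Proof. by move=> x; rewrite vactM mulVg vact1. Qed.

Lemma vact_inj g : injective (@vact _ _ I g).
Proof. exact: can_inj (vactK g). Qed.

Lemma vact_mkvert g v h : vact g (mkvert I v h) = mkvert I v (g * h)%g.
Proof. by apply: val_inj; rewrite /= lcosetM. Qed.

Lemma mkvert_repr (x : dvert I) :
  x = mkvert I (dvert_base x) (fingroup.repr (dvert_coset x)).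
Proof.
case: x => [[v C] C_coset]; apply: val_inj; rewrite /dvert_coset /dvert_base /=; congr pair.
have /lcosetsP[g _ /= ->] := C_coset.
by apply/esym/lcoset_eqP; apply: fingroup.mem_repr (lcoset_refl _ _).
Qed.

Lemma eq_mkvert v a b : (mkvert I v a == mkvert I v b) = ((a^-1 * b)%g \in I v).
Proof.
apply/eqP/idP => [/(congr1 (@dvert_coset _ _ I)) /= eqab | Iab].
  by rewrite -mem_lcoset; move: eqab; rewrite /dvert_coset /= => ->; apply: lcoset_refl.
by apply: val_inj; congr pair; apply/lcoset_eqP; rewrite mem_lcoset -groupV invMg invgK.
Qed.

End DerivedGraph.

Section DerivedExactSeq.
Variables (V E : finType) (s t : E -> V) (bar : E -> E) (gT : finGroupType)
  (alpha : E -> gT) (I : V -> {group gT}).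
Hypotheses (serreX : serre_graph s t bar)
  (alpha_bar : forall e, alpha (bar e) = ((alpha e)^-1)%g).

Lemma dsrc_dbar ge : dsrc s I (dbar bar alpha ge) = dtgt t alpha I ge.
Proof. by case: serreX => _ _ s_bar; rewrite /dsrc /dtgt /= s_bar. Qed.

Lemma dtgt_dbar ge : dtgt t alpha I (dbar bar alpha ge) = dsrc s I ge.
Proof.
by case: serreX => barK _ s_bar; rewrite /dsrc /dtgt /= alpha_bar mulgK -s_bar barK.
Qed.

Lemma dbar_inj : injective (dbar bar alpha).
Proof.
by apply: (can_inj (g := dbar bar alpha)) => -[g e]; case: serreX => barK _ _;
  rewrite /dbar /= alpha_bar mulgK barK.
Qed.

Lemma dlap_dact g D : dlap s t alpha I (dact g D) = dact g (dlap s t alpha I D).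
Proof.
apply: (laplacian_precomp (@vact_inj _ _ I g^-1) (sg := fun ge => ((g^-1 * ge.1)%g, ge.2))).
- by apply: (can_inj (g := fun ge => ((g * ge.1)%g, ge.2))) => -[h e]; rewrite /= mulKVg.
- by move=> [h e]; rewrite /dsrc vact_mkvert.
- by move=> [h e]; rewrite /dtgt vact_mkvert mulgA.
Qed.

Hypothesis connXI : connected_graph (dsrc s I) (dtgt t alpha I).

Lemma derived_exact_seq : exact_seq s t alpha I.
Proof.
have [/card_gt0P[x0 _] conn] := connXI.
have dunit_cst n : dunit I n = [ffun=> n] by apply/ffunP => x; rewrite dunitE ffunE.
split.
- split; first by move=> n m; rewrite /dunit mulrzDr.
  split; first by move=> g n; apply/ffunP => x; rewrite ffunE !dunitE.
  by split; [exact: laplacianD | exact: dlap_dact].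
- by move=> n /(congr1 (fun D : divisor _ => D x0)); rewrite /= dunitE ffunE.
- move=> D; split=> [LD0 | [n ->]].
    exists (D x0); apply/ffunP => y; rewrite dunitE.
    exact: (laplacian_eq0_cst dbar_inj dsrc_dbar dtgt_dbar conn LD0).
  by rewrite dunit_cst; apply: (laplacian_cst dbar_inj dsrc_dbar dtgt_dbar).
- by move=> D; rewrite /dto_pic to_pic_eq subr0.
- exact: to_pic_surj.
Qed.

End DerivedExactSeq.

Section QuotientVertices.
Variables (V : finType) (gT : finGroupType) (I : V -> {group gT}) (H : {group gT}).
Hypothesis nH : (H <| [set: gT])%g.

Let normH g : g \in 'N(H)%g := subsetP (normal_norm nH) g (in_setT g).

Lemma cosetM g h : coset H (g * h)%g = (coset H g * coset H h)%g.
Proof. exact: morphM. Qed.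

Lemma cosetV g : coset H g^-1%g = (coset H g)^-1%g.
Proof. exact: morphV. Qed.

Lemma coset_eq1 h : (coset H h == 1%g) = (h \in H).
Proof. by apply/eqP/idP; [apply: coset_idr | apply: coset_id]. Qed.

Lemma sum_coset_fibre (F : gT -> int) c :
  \sum_(g | coset H g == coset H c) F g = \sum_(h in H) F (c * h)%g.
Proof.
rewrite (reindex_inj (mulgI c)) /=; apply: eq_bigl => h.
by rewrite cosetM -{2}(mulg1 (coset H c)) (inj_eq (mulgI _)) coset_eq1.
Qed.

Lemma mem_qI v z : (coset H z \in qI H I v) = (z \in I v * H)%g.
Proof.
have normIv : I v \subset 'N(H)%g by apply/subsetP => g _.
by have := normH z; rewrite (normC normIv) -quotientK // morphpreE !inE => ->.
Qed.

Lemma qvert_mkvert v g : qvert H (mkvert I v g) = mkvert (qI H I) v (coset H g).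
Proof.
rewrite /qvert /dvert_base /dvert_coset /=; set r := fingroup.repr _.
have Igr : (g^-1 * r)%g \in I v.
  by rewrite -mem_lcoset; apply: fingroup.mem_repr (lcoset_refl _ _).
by apply/eqP; rewrite eq_mkvert -cosetV -cosetM mem_quotient // -groupV invMg invgK.
Qed.

Lemma qvert_vact g (x : dvert I) : qvert H (vact g x) = vact (coset H g) (qvert H x).
Proof. by rewrite (mkvert_repr x) vact_mkvert !qvert_mkvert vact_mkvert cosetM. Qed.

Lemma sum_qfibre_vact g y (F : dvert I -> int) :
  \sum_(x | qvert H x == vact (coset H g) y) F x = \sum_(x | qvert H x == y) F (vact g x).
Proof.
rewrite (reindex_inj (@vact_inj _ _ I g)); apply: eq_bigl => x.
by rewrite qvert_vact (inj_eq (@vact_inj _ _ _ _)).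
Qed.

Lemma qproj_zgamma_linear : zgamma_linear (coset H) (qproj H (I := I)).
Proof.
split=> [D1 D2 | g D]; apply/ffunP => y; rewrite !ffunE.
  by rewrite -big_split; apply: eq_bigr => x _; rewrite ffunE.
by rewrite -cosetV sum_qfibre_vact; apply: eq_bigr => x _; rewrite ffunE.
Qed.

Lemma qbeta_zgamma_linear : zgamma_linear (coset H) (qbeta H (I := I)).
Proof.
split=> [D1 D2 | g D]; apply/ffunP => y; rewrite !ffunE.
  by rewrite -big_split; apply: eq_bigr => x _; rewrite ffunE mulrDr.
by rewrite -cosetV sum_qfibre_vact; apply: eq_bigr => x _; rewrite ffunE.
Qed.

Lemma qbeta_delta v :
  qbeta H (delta (mkvert I v 1%g)) = delta (mkvert (qI H I) v 1%g) *~ #|H :&: I v|%g.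
Proof.
apply/ffunP => y; rewrite ffunMzE !ffunE big_mkcond (bigD1 (mkvert I v 1%g)) //=.
rewrite big1 => [|x nx1]; last by rewrite ffunE (negbTE nx1) mulr0 if_same.
rewrite qvert_mkvert morph1 !ffunE eqxx mulr1 addr0 (eq_sym y) mulrzz.
by case: eqP; rewrite ?mul1r ?mul0r.
Qed.

Lemma card_qfibre_lifts v c x : qvert H x = mkvert (qI H I) v (coset H c) ->
  #|[pred h in H | mkvert I v (c * h)%g == x]| = #|H :&: I v|.
Proof.
move=> qx; have xv : dvert_base x = v by move/(congr1 (@dvert_base _ _ _)): qx.
move: qx; rewrite (mkvert_repr x) xv; set r := fingroup.repr _.
rewrite qvert_mkvert => /eqP; rewrite eq_mkvert -cosetV -cosetM mem_qI.
case/mulsgP=> i h1 Ii Hh1 eri; rewrite -(card_lcoset _ h1^-1); apply: eq_card => h.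
rewrite mem_lcoset invgK !inE eq_sym eq_mkvert mulgA eri -mulgA (groupMl _ Ii).
by rewrite (groupMl _ Hh1).
Qed.

Lemma qbeta_mkvert D v c :
  qbeta H D (mkvert (qI H I) v (coset H c)) = \sum_(h in H) D (mkvert I v (c * h)%g).
Proof.
symmetry; rewrite ffunE (partition_big (fun h => mkvert I v (c * h)%g)
  (fun x => qvert H x == mkvert (qI H I) v (coset H c))) /=; last first.
  by move=> h Hh; rewrite qvert_mkvert cosetM (coset_id Hh) mulg1.
apply: eq_bigr => x /eqP qx; rewrite (eq_bigr (fun=> D x)) => [|h /andP[_ /eqP ->]] //.
have xv : dvert_base x = v by move/(congr1 (@dvert_base _ _ _)): qx.
by rewrite sumr_const -mulr_natl natz xv -(card_qfibre_lifts qx).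
Qed.

Lemma qbeta_dunit n : qbeta H (dunit I n) = dunit (qI H I) (#|H|%:Z * n).
Proof.
apply/ffunP => y; rewrite dunitE (mkvert_repr y) -(coset_reprK (fingroup.repr _)).
rewrite qbeta_mkvert; under eq_bigr do rewrite dunitE.
by rewrite sumr_const -mulr_natl natz.
Qed.

Definition qsection (y : dvert (qI H I)) : dvert I :=
  mkvert I (dvert_base y) (fingroup.repr (fingroup.repr (dvert_coset y))).

Lemma qsectionK : cancel qsection (qvert H).
Proof. by move=> y; rewrite /qsection qvert_mkvert coset_reprK -mkvert_repr. Qed.

Lemma qproj_surj (D' : divisor (dvert (qI H I))) : exists D, qproj H D = D'.
Proof.
exists [ffun x => \sum_(y | qsection y == x) D' y]; apply/ffunP => y; rewrite ffunE.
under eq_bigr do rewrite ffunE.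
rewrite [RHS](_ : _ = \sum_(y' | y' == y) D' y'); last by rewrite big_pred1_eq.
rewrite [RHS](partition_big qsection (fun x => qvert H x == y)) /=.
  apply: eq_bigr => x qxy; apply: eq_bigl => y'.
  case: eqP => [sx | _]; last by rewrite andbF.
  by rewrite andbT -(eqP qxy) -sx qsectionK eqxx.
by move=> y' /eqP <-; rewrite qsectionK.
Qed.

End QuotientVertices.

Lemma qalpha_inv (E : finType) (bar : E -> E) (gT : finGroupType) (alpha : E -> gT)
    (H : {group gT}) :
  (H <| [set: gT])%g -> (forall e, alpha (bar e) = (alpha e)^-1%g) ->
  forall e, qalpha H alpha (bar e) = (qalpha H alpha e)^-1%g.
Proof. by move=> nH alpha_bar e; rewrite /qalpha alpha_bar cosetV. Qed.

Section QuotientVoltageGraph.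
Variables (V E : finType) (s t : E -> V) (gT : finGroupType) (alpha : E -> gT)
  (I : V -> {group gT}) (H : {group gT}).
Hypothesis nH : (H <| [set: gT])%g.

Let qedge (ge : gT * E) : coset_of H * E := (coset H ge.1, ge.2).

Lemma qvert_dsrc ge : qvert H (dsrc s I ge) = dsrc s (qI H I) (qedge ge).
Proof. by rewrite /dsrc qvert_mkvert. Qed.

Lemma qvert_dtgt ge :
  qvert H (dtgt t alpha I ge) = dtgt t (qalpha H alpha) (qI H I) (qedge ge).
Proof. by rewrite /dtgt qvert_mkvert // cosetM. Qed.

Lemma connected_qgraph : connected_graph (dsrc s I) (dtgt t alpha I) ->
  connected_graph (dsrc s (qI H I)) (dtgt t (qalpha H alpha) (qI H I)).
Proof.
case=> /card_gt0P[x0 _] conn; split; first by apply/card_gt0P; exists (qvert H x0).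
move=> y1 y2; rewrite -(qsectionK nH y1) -(qsectionK nH y2).
apply: (connect_homo _ (conn _ _)) => x y /existsP[ge /andP[/eqP srcx /eqP tgty]].
by apply/existsP; exists (qedge ge); rewrite -qvert_dsrc -qvert_dtgt srcx tgty !eqxx.
Qed.

Lemma qbeta_dsrc_fibre D c e :
  qbeta H D (dsrc s (qI H I) (c, e)) = \sum_(ge | qedge ge == (c, e)) D (dsrc s I ge).
Proof.
rewrite /dsrc /= -(coset_reprK c) qbeta_mkvert //.
rewrite -(sum_coset_fibre nH (fun g => D (mkvert I (s e) g))).
set c0 := fingroup.repr c.
rewrite (eq_bigl (fun ge => (coset H ge.1 == coset H c0) && (ge.2 == e))); last first.
  by case=> g e'; rewrite xpair_eqE.
rewrite -(pair_big_dep (fun g => coset H g == coset H c0) (fun _ e' => e' == e)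
  (fun g e' => D (mkvert I (s e') g))) /=.
by apply: eq_bigr => g _; rewrite big_pred1_eq.
Qed.

Lemma qproj_dlap D :
  qproj H (dlap s t alpha I D) = dlap s t (qalpha H alpha) (qI H I) (qbeta H D).
Proof.
apply/ffunP => y; rewrite ffunE /dlap laplacianE.
under eq_bigr do rewrite laplacianE.
rewrite exchange_big /=.
under eq_bigr do rewrite -mulr_sumr sumrB !sum_fibre_indicator qvert_dsrc qvert_dtgt.
rewrite (partition_big qedge xpredT) //=; apply: eq_bigr => -[c e] _.
under eq_bigr => ge /eqP qge do rewrite qge.
by rewrite -mulr_suml qbeta_dsrc_fibre.
Qed.

Lemma dto_pic_qproj D D' : dto_pic s t alpha I D = dto_pic s t alpha I D' ->
  dto_pic s t (qalpha H alpha) (qI H I) (qproj H D) =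
  dto_pic s t (qalpha H alpha) (qI H I) (qproj H D').
Proof.
rewrite /dto_pic !to_pic_eq => -[D0 eqD]; exists (qbeta H D0).
have [qprojD _] := qproj_zgamma_linear I nH.
by rewrite -{1}(subrK D' D) qprojD addrK eqD qproj_dlap.
Qed.

Definition qpic (P : dPic s t alpha I) : dPic s t (qalpha H alpha) (qI H I) :=
  dto_pic s t (qalpha H alpha) (qI H I) (qproj H (repr P)).

Lemma qpicE D :
  qpic (dto_pic s t alpha I D) = dto_pic s t (qalpha H alpha) (qI H I) (qproj H D).
Proof. exact/dto_pic_qproj/reprK. Qed.

Lemma qpic_surj P : exists Q, qpic Q = P.
Proof.
have [D' <-] := to_pic_surj P; have [D <-] := qproj_surj nH D'.
by exists (dto_pic s t alpha I D); rewrite qpicE.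
Qed.

End QuotientVoltageGraph.

Theorem proposition3p3 (V E : finType) (s t : E -> V) (bar : E -> E)
  (gT : finGroupType) (alpha : E -> gT) (I : V -> {group gT}) :
  serre_graph s t bar ->
  (forall e, alpha (bar e) = ((alpha e)^-1)%g) ->
  connected_graph (dsrc s I) (dtgt t alpha I) ->
  (* (1) *)
  exact_seq s t alpha I /\
  (* (2) *)
  (forall H : {group gT}, (H <| [set: gT])%g ->
     exact_seq s t (qalpha H alpha) (qI H I) /\
     [/\ zgamma_linear (coset H) (qbeta H (I := I)) /\
         zgamma_linear (coset H) (qproj H (I := I)),
         (forall v : V,
            qbeta H (delta (mkvert I v 1%g)) =
            delta (mkvert (qI H I) v 1%g) *~ #|H :&: I v|),
         (* square Z -> Div *)
         (forall n : int, qbeta H (dunit I n) = dunit (qI H I) (#|H|%:Z * n)),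
         (* square Div -> Div *)
         (forall D, qproj H (dlap s t alpha I D) =
                    dlap s t (qalpha H alpha) (qI H I) (qbeta H D)) &
         (* square Div -> Pic, with the induced surjection on Pic *)
         exists phi : dPic s t alpha I -> dPic s t (qalpha H alpha) (qI H I),
           (forall D, phi (dto_pic s t alpha I D) =
                      dto_pic s t (qalpha H alpha) (qI H I) (qproj H D)) /\
           (forall P, exists Q, phi Q = P)]).
Proof.
move=> serreX alpha_bar connXI.
split; first exact: derived_exact_seq serreX alpha_bar connXI.
move=> H nH; split.
  exact: derived_exact_seq serreX (qalpha_inv nH alpha_bar) (connected_qgraph nH connXI).
split.
- by split; [exact: qbeta_zgamma_linear | exact: qproj_zgamma_linear].
- exact: qbeta_delta.
- exact: qbeta_dunit.
- exact: qproj_dlap.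
- by exists (qpic H); split; [exact: qpicE | exact: qpic_surj].
Qed.
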